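(* Let $A$ and $B$ be $\Bbbk$-algebras. Then there are isomorphisms of $\Bbbk$-vector spaces (1) $\mathcal{E}_{A\times B}\cong\mathcal{E}_A\times\mathcal{E}_B$; in particular $\operatorname{Frobdim}(A\times B)=\operatorname{Frobdim}(A)+\operatorname{Frobdim}(B)$; (2) $\mathcal{E}_{A\otimes B}\cong\mathcal{E}_A\otimes\mathcal{E}_B$; therefore $\operatorname{Frobdim}(A\otimes B)=\operatorname{Frobdim}(A)\cdot\operatorname{Frobdim}(B)$.
   Context: Algebras are associative and unital over a field $\Bbbk$; tensor products are over $\Bbbk$; $A\times B$ is the product algebra with componentwise operations and $A\otimes B$ the tensor product algebra. A nearly Frobenius coproduct on an algebra $A$ is a $\Bbbk$-linear map $\Delta:A\to A\otimes A$ that is an $A$-bimodule morphism, i.e. $\Delta(ab)=(a\otimes 1)\Delta(b)=\Delta(a)(1\otimes b)$ for all $a,b\in A$. The Frobenius space $\mathcal{E}_A$ is the vector space of all nearly Frobenius coproducts on $A$, and $\operatorname{Frobdim}A=\dim_\Bbbk\mathcal{E}_A$. *)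

(* Finite-dimensional algebras over a field K, given in
   coordinates on K^n (row vectors 'rV[K]_n). *)
From HB Require Import structures.
From mathcomp Require Import all_boot all_order all_algebra.
From Stdlib Require Import ClassicalEpsilon.
Set Implicit Arguments. Unset Strict Implicit. Unset Printing Implicit Defensive.
Import GRing.Theory.
Local Open Scope ring_scope.

Section Defs.
Variable K : fieldType.

Record algd (n : nat) := AlgD {
  amul : 'rV[K]_n -> 'rV[K]_n -> 'rV[K]_n;
  aone : 'rV[K]_n }.

Definition is_alg (n : nat) (A : algd n) : Prop :=
  [/\ (forall (k : K) a b c, amul A (k *: a + b) c = k *: amul A a c + amul A b c),
      (forall (k : K) a b c, amul A a (k *: b + c) = k *: amul A a b + amul A a c),
      (forall a b c, amul A a (amul A b c) = amul A (amul A a b) c),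
      (forall a, amul A (aone A) a = a) &
      (forall a, amul A a (aone A) = a)].

(* Tensor product of vectors: K^p (x) K^q identified with K^(p*q) via mxvec;
   tens u v has coordinate u_i v_j at index (i,j). *)
Definition tens (p q : nat) (u : 'rV[K]_p) (v : 'rV[K]_q) : 'rV[K]_(p * q) :=
  mxvec (u^T *m v).

Definition ev (p : nat) (i : 'I_p) : 'rV[K]_p := delta_mx 0 i.

(* Multiplication of the tensor product algebra A (x) B:
   (a (x) b)(a' (x) b') = aa' (x) bb', extended bilinearly. *)
Definition tmul (n m : nat) (A : algd n) (B : algd m) (x y : 'rV[K]_(n * m)) :
    'rV[K]_(n * m) :=
  \sum_(i < n) \sum_(j < m) \sum_(k < n) \sum_(l < m)
     ((vec_mx x) i j * (vec_mx y) k l) *: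
        tens (amul A (ev i) (ev k)) (amul B (ev j) (ev l)).

Definition talg (n m : nat) (A : algd n) (B : algd m) : algd (n * m) :=
  AlgD (tmul A B) (tens (aone A) (aone B)).

Definition palg (n m : nat) (A : algd n) (B : algd m) : algd (n + m) :=
  AlgD (fun x y => row_mx (amul A (lsubmx x) (lsubmx y)) (amul B (rsubmx x) (rsubmx y)))
       (row_mx (aone A) (aone B)).

(* A K-linear map Delta : A -> A (x) A is given by its matrix D,
   Delta(a) = a *m D.  Nearly Frobenius coproduct condition:
   Delta(ab) = (a (x) 1) Delta(b) = Delta(a) (1 (x) b). *)
Definition is_nf (n : nat) (A : algd n) (D : 'M[K]_(n, n * n)) : Prop :=
  forall a b,
    amul A a b *m D = tmul A A (tens a (aone A)) (b *m D) /\
    amul A a b *m D = tmul A A (a *m D) (tens (aone A) b).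

(* The Frobenius space E_A: the subspace of all nearly Frobenius coproducts
   (defined by description: the subspace whose members are exactly them). *)
Definition frobspace (n : nat) (A : algd n) : {vspace 'M[K]_(n, n * n)} :=
  epsilon (inhabits 0%VS) (fun U : {vspace 'M[K]_(n, n * n)} =>
                             forall D, D \in U <-> is_nf A D).

Definition Frobdim (n : nat) (A : algd n) : nat := \dim (frobspace A).

(* Tensor product of subspaces U <= K^(p x q), W <= K^(r x s), realised inside
   K^(pq) (x) K^(rs) = K^((p*q)*(r*s)) as the span of the u (x) w. *)
Definition vtens (p q r s : nat) (U : {vspace 'M[K]_(p, q)}) (W : {vspace 'M[K]_(r, s)})
    : {vspace 'rV[K]_((p * q) * (r * s))} :=
  << [seq tens (mxvec X) (mxvec Y) | X <- vbasis U, Y <- vbasis W] >>%VS.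

End Defs.

From Pilot Require Import Defs.
From HB Require Import structures.
From mathcomp Require Import all_boot all_order all_algebra.
From mathcomp Require Import ring zify.
From Stdlib Require Import ClassicalEpsilon.
Set Implicit Arguments. Unset Strict Implicit. Unset Printing Implicit Defensive.
Import GRing.Theory.
Local Open Scope ring_scope.

(* The nearly Frobenius condition is bilinear in its two arguments, so it can be
   tested on basis vectors, where it becomes a system of linear identities between
   the coproduct matrix and the structure constants.

   Product: A embeds in P = A x B as a two-sided ideal with a multiplicative
   retraction P -> A, and likewise B.  Restricting a nearly Frobenius coproduct of
   P to A (and projecting P (x) P onto A (x) A) gives one of A; pulling one of A
   back along the retraction gives one of P.  If e is the unit of A inside P, then
   Delta(x) = (e (x) 1) Delta(x) (1 (x) e) for every x in A, and since
   1 = e_A + e_B, every coproduct of P is the sum of the pull-backs of its two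
   restrictions.

   Tensor product: a permutation of coordinates sends X (x) Y to the coproduct
   a (x) b |-> Delta_X(a) (x) Delta_Y(b) with the two middle factors exchanged; it
   is nearly Frobenius because the structure constants of A (x) B are products of
   those of A and B.  Conversely, fixing the B-indices (resp. the A-indices) of a
   nearly Frobenius coproduct of A (x) B gives nearly Frobenius coproducts of A
   (resp. B), and a tensor all of whose slices lie in E_A, resp. E_B, lies in
   E_A (x) E_B. *)

Section RowTensors.
Variable K : fieldType.
Local Notation ev := (ev K).

Definition mxvec_unindex p q (k : 'I_(p * q)) : 'I_p * 'I_q :=
  enum_val (cast_ord (esym (mxvec_cast p q)) k).

Lemma mxvec_indexK p q (i : 'I_p) (j : 'I_q) : mxvec_unindex (mxvec_index i j) = (i, j).
Proof. by rewrite /mxvec_unindex cast_ordK enum_rankK. Qed.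

Lemma sum_mxvec_index (V : nmodType) p q (F : 'I_(p * q) -> V) :
  \sum_k F k = \sum_i \sum_j F (mxvec_index i j).
Proof.
rewrite pair_big (reindex (uncurry (@mxvec_index p q))) /=; first by apply: eq_bigr => -[].
by case: (curry_mxvec_bij p q) => g gK Kg; exists g => ? _; [exact: gK | exact: Kg].
Qed.

Lemma evE p (i j : 'I_p) : ev i 0 j = (i == j)%:R.
Proof. by rewrite mxE eqxx eq_sym. Qed.

Lemma evC p (i j : 'I_p) : ev i 0 j = ev j 0 i.
Proof. by rewrite !evE eq_sym. Qed.

Lemma sum_mul_ev p (F : 'I_p -> K) j : \sum_i F i * ev i 0 j = F j.
Proof.
rewrite (bigD1 j) //= evE eqxx mulr1 big1 ?addr0 // => i /negbTE nij.
by rewrite evE nij mulr0.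
Qed.

Lemma sum_ev_mul p (F : 'I_p -> K) j : \sum_i ev i 0 j * F i = F j.
Proof. by under eq_bigr do rewrite mulrC; apply: sum_mul_ev. Qed.

Lemma row_ev_mulmx p q (D : 'M[K]_(p, q)) i : ev i *m D = row i D.
Proof. by rewrite rowE. Qed.

Lemma tensE p q (u : 'rV[K]_p) (v : 'rV[K]_q) i j :
  tens u v 0 (mxvec_index i j) = u 0 i * v 0 j.
Proof. by rewrite /tens mxvecE mxE big_ord1 mxE. Qed.

Lemma ev_tens p q (i : 'I_p) (j : 'I_q) : ev (mxvec_index i j) = tens (ev i) (ev j).
Proof. by rewrite /tens /Defs.ev trmx_delta mul_delta_mx mxvec_delta. Qed.

Lemma tens_linl p q (v : 'rV[K]_q) : linear (fun u : 'rV[K]_p => tens u v).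
Proof. by move=> k u u'; rewrite /tens [(_ + _)^T]linearP mulmxDl -scalemxAl linearP. Qed.

Lemma tens_linr p q (u : 'rV[K]_p) : linear (fun v : 'rV[K]_q => tens u v).
Proof. by move=> k v v'; rewrite /tens mulmxDr -scalemxAr linearP. Qed.

Lemma linear_row_expand p (V : lmodType K) (f : 'rV[K]_p -> V) :
  linear f -> forall a, f a = \sum_i a 0 i *: f (ev i).
Proof.
move=> f_lin a.
pose fL : {linear _ -> V} := HB.pack f (GRing.isLinear.Build _ _ _ _ f f_lin).
rewrite -[f a]/(fL a) {1}[a]row_sum_delta linear_sum.
by apply: eq_bigr => i _; rewrite linearZ.
Qed.

Lemma linear_row0 p (V : lmodType K) (f : 'rV[K]_p -> V) : linear f -> f 0 = 0.
Proof.
by move=> f_lin; rewrite (linear_row_expand f_lin) big1 // => i _; rewrite mxE scale0r.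
Qed.

Lemma linear_row_ext p (V : lmodType K) (f g : 'rV[K]_p -> V) :
  linear f -> linear g -> (forall i, f (ev i) = g (ev i)) -> f =1 g.
Proof.
move=> f_lin g_lin fg a; rewrite (linear_row_expand f_lin) (linear_row_expand g_lin).
by apply: eq_bigr => i _; rewrite fg.
Qed.

Lemma bilinear_row_ext p q (V : lmodType K) (f g : 'rV[K]_p -> 'rV[K]_q -> V) :
  bilinear_for *:%R *:%R f -> bilinear_for *:%R *:%R g ->
  (forall i j, f (ev i) (ev j) = g (ev i) (ev j)) -> forall a b, f a b = g a b.
Proof.
move=> [fl fr] [gl gr] fg a b; apply: (linear_row_ext (fl b) (gl b)) => i.
exact: (linear_row_ext (fr _) (gr _)).
Qed.

Definition mxtens p q r s (M : 'M[K]_(p, r)) (N : 'M[K]_(q, s)) (T : 'rV[K]_(p * q)) :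
  'rV[K]_(r * s) := mxvec (M^T *m vec_mx T *m N).

Lemma mxtens_tens p q r s (M : 'M[K]_(p, r)) (N : 'M[K]_(q, s)) u v :
  mxtens M N (tens u v) = tens (u *m M) (v *m N).
Proof. by rewrite /mxtens /tens mxvecK trmx_mul !mulmxA. Qed.

Lemma mxtens_comp p q r s r' s' (M : 'M[K]_(p, r)) (N : 'M[K]_(q, s))
    (M' : 'M[K]_(r, r')) (N' : 'M[K]_(s, s')) T :
  mxtens M' N' (mxtens M N T) = mxtens (M *m M') (N *m N') T.
Proof. by rewrite /mxtens mxvecK trmx_mul !mulmxA. Qed.

Lemma mxtens1 p q (T : 'rV[K]_(p * q)) : mxtens 1%:M 1%:M T = T.
Proof. by rewrite /mxtens trmx1 mul1mx mulmx1 vec_mxK. Qed.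

Fact mxtens_is_linear p q r s (M : 'M[K]_(p, r)) (N : 'M[K]_(q, s)) :
  linear (mxtens M N).
Proof.
by move=> k S T; rewrite /mxtens linearP /= mulmxDr mulmxDl -scalemxAr -scalemxAl linearP.
Qed.

HB.instance Definition _ p q r s (M : 'M[K]_(p, r)) (N : 'M[K]_(q, s)) :=
  GRing.isLinear.Build K _ _ _ (mxtens M N) (mxtens_is_linear M N).

End RowTensors.

Section ClosedSubspace.
Variables (K : fieldType) (vT : vectType K) (P : vT -> Prop).
Hypotheses (P0 : P 0) (P_comb : forall k u v, P u -> P v -> P (k *: u + v)).

Lemma vspace_of_closed : exists U : {vspace vT}, forall v, v \in U <-> P v.
Proof.
have step (U : {vspace vT}) : (forall u, u \in U -> P u) ->
    (exists U' : {vspace vT}, forall v, v \in U' <-> P v) \/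
    exists2 U' : {vspace vT}, (\dim U < \dim U')%N & forall u, u \in U' -> P u.
  move=> UP; have [[v Pv vNU]|maxU] := classic (exists2 v, P v & v \notin U); last first.
    left; exists U => v; split; first exact: UP.
    by move=> Pv; apply/negPn/negP => vNU; apply: maxU; exists v.
  right; exists (U + <[v]>)%VS.
    by rewrite (ltn_leqif (dimv_leqif_sup (addvSl U <[v]>))) subv_add subvv andTb -memvE.
  by move=> w /memv_addP[u uU [x /vlineP[c ->] ->]]; rewrite addrC; exact: P_comb (UP u uU).
suff grow k (U : {vspace vT}) : (\dim {:vT} - \dim U <= k)%N ->
    (forall u, u \in U -> P u) -> exists U' : {vspace vT}, forall v, v \in U' <-> P v.
  by apply: (grow _ 0%VS (leqnn _)) => u; rewrite memv0 => /eqP->.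
elim: k U => [|k IH] U le_U /step[//|[U' ltU U'P]]; have := dimvS (subvf U').
  by move=> ?; exfalso; lia.
by move=> le_full; apply: (IH U') => //; lia.
Qed.

End ClosedSubspace.

Lemma dimv_of_split (K : fieldType) (vT vT1 vT2 : vectType K)
    (f : 'Hom(vT, vT1)) (g : 'Hom(vT, vT2))
    (U : {vspace vT}) (U1 : {vspace vT1}) (U2 : {vspace vT2}) :
  (forall x, x \in U -> f x \in U1 /\ g x \in U2) ->
  (forall x1 x2, x1 \in U1 -> x2 \in U2 -> exists2 x, x \in U & f x = x1 /\ g x = x2) ->
  (forall x, x \in U -> f x = 0 -> g x = 0 -> x = 0) ->
  \dim U = (\dim U1 + \dim U2)%N.
Proof.
move=> fgU onto fg_inj.
have imf : (f @: U)%VS = U1.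
  apply/vspaceP => x1; apply/memv_imgP/idP => [[x xU ->]|x1U]; first exact: (fgU x xU).1.
  by have [x xU [<- _]] := onto x1 0 x1U (mem0v _); exists x.
have img : (g @: (U :&: lker f))%VS = U2.
  apply/vspaceP => x2; apply/memv_imgP/idP => [[x /memv_capP[xU _] ->]|x2U].
    exact: (fgU x xU).2.
  have [x xU [fx0 <-]] := onto 0 x2 (mem0v _) x2U.
  by exists x; rewrite // memv_cap xU memv_ker fx0 eqxx.
have ker_g : ((U :&: lker f) :&: lker g = 0)%VS.
  apply/eqP; rewrite -subv0; apply/subvP => x.
  rewrite !memv_cap !memv_ker => /andP[/andP[xU /eqP fx0] /eqP gx0].
  by rewrite (fg_inj x xU fx0 gx0) mem0v.
by rewrite -(limg_ker_dim f U) imf -(limg_dim_eq ker_g) img addnC.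
Qed.

Section FrobeniusSpace.
Variable K : fieldType.

Lemma tmul_linl n m (A : algd K n) (B : algd K m) y : linear (tmul A B ^~ y).
Proof.
move=> c x1 x2; rewrite /tmul scaler_sumr -big_split; apply: eq_bigr => i _.
rewrite scaler_sumr -big_split; apply: eq_bigr => j _.
rewrite scaler_sumr -big_split; apply: eq_bigr => k _.
rewrite scaler_sumr -big_split; apply: eq_bigr => l _.
by rewrite linearP !mxE mulrDl -mulrA scalerDl scalerA.
Qed.

Lemma tmul_linr n m (A : algd K n) (B : algd K m) x : linear (tmul A B x).
Proof.
move=> c y1 y2; rewrite /tmul scaler_sumr -big_split; apply: eq_bigr => i _.
rewrite scaler_sumr -big_split; apply: eq_bigr => j _.
rewrite scaler_sumr -big_split; apply: eq_bigr => k _.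
rewrite scaler_sumr -big_split; apply: eq_bigr => l _.
by rewrite linearP !mxE mulrDr mulrCA scalerDl scalerA.
Qed.

Lemma is_nf0 n (A : algd K n) : is_nf A 0.
Proof.
move=> a b; rewrite !mulmx0 (linear_row0 (tmul_linr _ _ _)).
by have /= -> := linear_row0 (tmul_linl A A (tens (aone A) b)).
Qed.

Lemma is_nf_comb n (A : algd K n) k D1 D2 :
  is_nf A D1 -> is_nf A D2 -> is_nf A (k *: D1 + D2).
Proof.
move=> nf1 nf2 a b; have [E1 E2] := nf1 a b; have [F1 F2] := nf2 a b.
by rewrite !mulmxDr -!scalemxAr tmul_linr tmul_linl -E1 -E2 -F1 -F2.
Qed.

Lemma mem_frobspace n (A : algd K n) D : D \in frobspace A <-> is_nf A D.
Proof. exact: (epsilon_spec _ _ (vspace_of_closed (@is_nf0 n A) (@is_nf_comb n A))). Qed.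

End FrobeniusSpace.

Section UnitalBilinear.
Variable K : fieldType.
Local Notation ev := (ev K).

Definition unital_bilinear n (A : algd K n) : Prop :=
  [/\ (forall (k : K) a b c, amul A (k *: a + b) c = k *: amul A a c + amul A b c),
      (forall (k : K) a b c, amul A a (k *: b + c) = k *: amul A a b + amul A a c),
      (forall a, amul A (aone A) a = a) &
      (forall a, amul A a (aone A) = a)].

Lemma is_alg_unital_bilinear n (A : algd K n) : is_alg A -> unital_bilinear A.
Proof. by case. Qed.

Definition sconst n (A : algd K n) (i k r : 'I_n) : K := amul A (ev i) (ev k) 0 r.

Variables (n : nat) (A : algd K n).
Hypothesis HA : unital_bilinear A.

Lemma amul_linl b : linear (amul A ^~ b).
Proof. by case: HA => mulDl _ _ _ k x y; rewrite mulDl. Qed.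

Lemma amul_linr a : linear (amul A a).
Proof. by case: HA => _ mulDr _ _ k x y; rewrite mulDr. Qed.

Lemma amul1l a : amul A (aone A) a = a. Proof. by case: HA. Qed.
Lemma amul1r a : amul A a (aone A) = a. Proof. by case: HA. Qed.

Lemma amul0l b : amul A 0 b = 0. Proof. exact: linear_row0 (amul_linl b). Qed.
Lemma amul0r a : amul A a 0 = 0. Proof. exact: linear_row0 (amul_linr a). Qed.

Lemma amulE a b r : amul A a b 0 r = \sum_i \sum_k a 0 i * b 0 k * sconst A i k r.
Proof.
rewrite (linear_row_expand (amul_linl b)) summxE; apply: eq_bigr => i _.
rewrite mxE (linear_row_expand (amul_linr _)) summxE mulr_sumr; apply: eq_bigr => k _.
by rewrite mxE mulrA.
Qed.

End UnitalBilinear.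

Section TensorMul.
Variable K : fieldType.
Local Notation ev := (ev K).
Variables (n m : nat) (A : algd K n) (B : algd K m).

Lemma tmulE x y r s :
  tmul A B x y 0 (mxvec_index r s) =
  \sum_i \sum_j \sum_k \sum_l x 0 (mxvec_index i j) * y 0 (mxvec_index k l) *
     (sconst A i k r * sconst B j l s).
Proof.
rewrite /tmul summxE; apply: eq_bigr => i _; rewrite summxE; apply: eq_bigr => j _.
rewrite summxE; apply: eq_bigr => k _; rewrite summxE; apply: eq_bigr => l _.
by rewrite !mxE tensE.
Qed.

Hypotheses (HA : unital_bilinear A) (HB : unital_bilinear B).

Lemma tmul_tens u v u' v' :
  tmul A B (tens u v) (tens u' v') = tens (amul A u u') (amul B v v').
Proof.
apply/rowP => X; case/mxvec_indexP: X => r s.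
rewrite tmulE tensE (amulE HA) (amulE HB) mulr_suml; apply: eq_bigr => i _.
rewrite exchange_big mulr_suml; apply: eq_bigr => k _; rewrite mulr_sumr.
apply: eq_bigr => j _; rewrite mulr_sumr; apply: eq_bigr => l _; rewrite !tensE /=; ring.
Qed.

Lemma tmul_tens1l a y r s :
  tmul A B (tens a (aone B)) y 0 (mxvec_index r s) =
  \sum_u y 0 (mxvec_index u s) * amul A a (ev u) 0 r.
Proof.
rewrite (linear_row_expand (tmul_linr _ _ _) y) sum_mxvec_index summxE.
apply: eq_bigr => u _; rewrite summxE.
under eq_bigr do rewrite mxE ev_tens tmul_tens (amul1l HB) tensE mulrCA mulrA.
by rewrite sum_mul_ev mulrC.
Qed.

Lemma tmul_tens1r x b r s :
  tmul A B x (tens (aone A) b) 0 (mxvec_index r s) =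
  \sum_v x 0 (mxvec_index r v) * amul B (ev v) b 0 s.
Proof.
rewrite (linear_row_expand (tmul_linl _ _ _) x) sum_mxvec_index summxE.
under eq_bigr do rewrite summxE; rewrite exchange_big; apply: eq_bigr => v _ /=.
under eq_bigr do rewrite mxE ev_tens tmul_tens (amul1r HA) tensE mulrCA.
by rewrite sum_ev_mul.
Qed.

End TensorMul.

Section CoordinateCondition.
Variable K : fieldType.
Local Notation ev := (ev K).
Variables (n : nat) (A : algd K n).

(* The coordinates at e_r (x) e_s of Delta(e_i e_k), (e_i (x) 1) Delta(e_k) and
   Delta(e_i) (1 (x) e_k). *)
Definition nf_coord (D : 'M[K]_(n, n * n)) := forall i k r s,
  \sum_t sconst A i k t * D t (mxvec_index r s) = \sum_u D k (mxvec_index u s) * sconst A i u r /\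
  \sum_t sconst A i k t * D t (mxvec_index r s) = \sum_v D i (mxvec_index r v) * sconst A v k s.

Hypothesis HA : unital_bilinear A.

Lemma is_nf_coordP D : is_nf A D <-> nf_coord D.
Proof.
have prodE i k r s : (amul A (ev i) (ev k) *m D) 0 (mxvec_index r s) =
    \sum_t sconst A i k t * D t (mxvec_index r s) by rewrite mxE.
have leftE i k r s : tmul A A (tens (ev i) (aone A)) (ev k *m D) 0 (mxvec_index r s) =
    \sum_u D k (mxvec_index u s) * sconst A i u r.
  by rewrite tmul_tens1l //; apply: eq_bigr => u _; rewrite row_ev_mulmx mxE.
have rightE i k r s : tmul A A (ev i *m D) (tens (aone A) (ev k)) 0 (mxvec_index r s) =
    \sum_v D i (mxvec_index r v) * sconst A v k s.
  by rewrite tmul_tens1r //; apply: eq_bigr => v _; rewrite row_ev_mulmx mxE.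
split=> [nfD i k r s | coordD a b].
  have [/rowP/(_ (mxvec_index r s)) E1 /rowP/(_ (mxvec_index r s)) E2] := nfD (ev i) (ev k).
  by split; [rewrite -prodE E1 leftE | rewrite -prodE E2 rightE].
have prod_bilin : bilinear_for *:%R *:%R (fun a b => amul A a b *m D).
  by split=> [y0|x0] c x y; rewrite ?(amul_linl HA) ?(amul_linr HA) mulmxDl -scalemxAl.
split.
  apply: (bilinear_row_ext (g := fun a b => tmul A A (tens a (aone A)) (b *m D)) prod_bilin).
    by split=> [y0|x0] c x y /=; rewrite ?tens_linl ?tmul_linl // mulmxDl -scalemxAl tmul_linr.
  move=> i k; apply/rowP => X; case/mxvec_indexP: X => r s.
  by rewrite prodE leftE (coordD i k r s).1.
apply: (bilinear_row_ext (g := fun a b => tmul A A (a *m D) (tens (aone A) b)) prod_bilin).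
  by split=> [y0|x0] c x y /=; rewrite ?tens_linr ?tmul_linr // mulmxDl -scalemxAl tmul_linl.
move=> i k; apply/rowP => X; case/mxvec_indexP: X => r s.
by rewrite prodE rightE (coordD i k r s).2.
Qed.

Lemma mem_frobspace_coord D : D \in frobspace A <-> nf_coord D.
Proof. by rewrite mem_frobspace is_nf_coordP. Qed.

End CoordinateCondition.

(* [inj] embeds A into P as a two-sided ideal on which P acts through the
   multiplicative retraction [pr]; the model case is A inside A x B. *)
Definition retract_ideal (K : fieldType) N n (P : algd K N) (A : algd K n)
    (pr : 'M[K]_(N, n)) (inj : 'M[K]_(n, N)) : Prop :=
  [/\ inj *m pr = 1%:M,
      forall x y, amul P x y *m pr = amul A (x *m pr) (y *m pr),
      forall a x, amul P (a *m inj) x = amul A a (x *m pr) *m inj &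
      forall a x, amul P x (a *m inj) = amul A (x *m pr) a *m inj].

Section Corner.
Variable K : fieldType.
Variables (N n : nat) (P : algd K N) (A : algd K n).
Variables (pr : 'M[K]_(N, n)) (inj : 'M[K]_(n, N)).
Hypotheses (HP : unital_bilinear P) (HA : unital_bilinear A).
Hypothesis HPA : retract_ideal P A pr inj.

Lemma retract_injK : inj *m pr = 1%:M.
Proof. by case: HPA. Qed.

Lemma retract_pr_mul x y : amul P x y *m pr = amul A (x *m pr) (y *m pr).
Proof. by case: HPA. Qed.

Lemma retract_inj_mull a x : amul P (a *m inj) x = amul A a (x *m pr) *m inj.
Proof. by case: HPA. Qed.

Lemma retract_inj_mulr a x : amul P x (a *m inj) = amul A (x *m pr) a *m inj.
Proof. by case: HPA. Qed.

Local Notation pr2 := (mxtens pr pr).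
Local Notation inj2 := (mxtens inj inj).

Lemma retract_injKV (a : 'rV[K]_n) : a *m inj *m pr = a.
Proof. by rewrite -mulmxA retract_injK mulmx1. Qed.

Lemma retract_pr_one : aone P *m pr = aone A.
Proof.
have := congr1 (mulmx^~ pr) (retract_inj_mulr (aone A) (aone P)).
by rewrite /= (amul1l HP) (amul1r HA) !retract_injKV => ->.
Qed.

Lemma pr2_tmul S T : pr2 (tmul P P S T) = tmul A A (pr2 S) (pr2 T).
Proof.
move: S T; apply: bilinear_row_ext.
- by split=> [y|x] c u v; rewrite (tmul_linl, tmul_linr) linearP.
- by split=> [y|x] c u v; rewrite linearP (tmul_linl, tmul_linr).
move=> I J; case/mxvec_indexP: I => i j; case/mxvec_indexP: J => k l.
by rewrite !ev_tens !tmul_tens // !mxtens_tens tmul_tens // !retract_pr_mul.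
Qed.

Lemma tmul_inj2r S T : tmul P P S (inj2 T) = inj2 (tmul A A (pr2 S) T).
Proof.
move: S T; apply: bilinear_row_ext.
- by split=> [y|x] c u v; rewrite (tmul_linl, linearP) ?tmul_linr.
- by split=> [y|x] c u v; rewrite (linearP, tmul_linr) ?tmul_linl ?linearP.
move=> I J; case/mxvec_indexP: I => i j; case/mxvec_indexP: J => k l.
by rewrite !ev_tens !mxtens_tens !tmul_tens // !retract_inj_mulr mxtens_tens.
Qed.

Lemma tmul_inj2l S T : tmul P P (inj2 T) S = inj2 (tmul A A T (pr2 S)).
Proof.
move: S T; apply: bilinear_row_ext.
- by split=> [y|x] c u v; rewrite (tmul_linr, linearP) ?tmul_linl.
- by split=> [y|x] c u v; rewrite (linearP, tmul_linl) ?tmul_linr ?linearP.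
move=> I J; case/mxvec_indexP: I => i j; case/mxvec_indexP: J => k l.
by rewrite !ev_tens !mxtens_tens !tmul_tens // !retract_inj_mull mxtens_tens.
Qed.

Local Notation e := (aone A *m inj).

Lemma mul_unit_corner_l x : amul P e x = x *m pr *m inj.
Proof. by rewrite retract_inj_mull (amul1l HA). Qed.

Lemma mul_unit_corner_r x : amul P x e = x *m pr *m inj.
Proof. by rewrite retract_inj_mulr (amul1r HA). Qed.

Lemma tmul_unit_corner T :
  tmul P P (tens e (aone P)) (tmul P P T (tens (aone P) e)) =
  mxtens (pr *m inj) (pr *m inj) T.
Proof.
move: T; apply: linear_row_ext.
- by move=> c u v; rewrite tmul_linl tmul_linr.
- exact: mxtens_is_linear.
move=> I; case/mxvec_indexP: I => i j.
rewrite ev_tens !tmul_tens // (amul1r HP) (amul1l HP).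
by rewrite mul_unit_corner_l mul_unit_corner_r mxtens_tens !mulmxA.
Qed.

Definition corner_res (D : 'M[K]_(N, N * N)) : 'M[K]_(n, n * n) :=
  inj *m D *m lin1_mx pr2.

Definition corner_ext (D : 'M[K]_(n, n * n)) : 'M[K]_(N, N * N) :=
  pr *m D *m lin1_mx inj2.

Lemma mul_corner_res a D : a *m corner_res D = pr2 (a *m inj *m D).
Proof. by rewrite /corner_res !mulmxA mul_rV_lin1. Qed.

Lemma mul_corner_ext x D : x *m corner_ext D = inj2 (x *m pr *m D).
Proof. by rewrite /corner_ext !mulmxA mul_rV_lin1. Qed.

Lemma corner_res_nf D : is_nf P D -> is_nf A (corner_res D).
Proof.
move=> nfD a b; have [E1 E2] := nfD (a *m inj) (b *m inj).
have inj_mul : amul A a b *m inj = amul P (a *m inj) (b *m inj).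
  by rewrite retract_inj_mull retract_injKV.
rewrite !mul_corner_res inj_mul; split; [rewrite E1 | rewrite E2].
all: by rewrite pr2_tmul !mxtens_tens !retract_injKV retract_pr_one.
Qed.

Lemma corner_ext_nf D : is_nf A D -> is_nf P (corner_ext D).
Proof.
move=> nfD x y; have [E1 E2] := nfD (x *m pr) (y *m pr).
rewrite !mul_corner_ext retract_pr_mul tmul_inj2r tmul_inj2l !mxtens_tens retract_pr_one.
by split; [rewrite E1 | rewrite E2].
Qed.

Lemma corner_extK : cancel corner_ext corner_res.
Proof.
move=> D; apply/row_matrixP => r; rewrite !rowE mul_corner_res mul_corner_ext.
by rewrite retract_injKV mxtens_comp retract_injK mxtens1.
Qed.

(* For x in the image of [inj], x = e x = x e, hence
   Delta(x) = (e (x) 1) Delta(x) (1 (x) e). *)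
Lemma corner_res_extE D : is_nf P D -> corner_ext (corner_res D) = pr *m inj *m D.
Proof.
move=> nfD; apply/row_matrixP => r; rewrite !rowE mul_corner_ext mul_corner_res.
set x := delta_mx 0 r *m pr *m inj.
have ex : amul P e x = x by rewrite mul_unit_corner_l /x retract_injKV.
have xe : amul P x e = x by rewrite mul_unit_corner_r /x retract_injKV.
have [E1 _] := nfD e x; have [_ E2] := nfD x e; rewrite ex in E1; rewrite xe in E2.
by rewrite mxtens_comp -tmul_unit_corner -E2 -E1 /x !mulmxA.
Qed.

End Corner.

Fact corner_res_is_linear (K : fieldType) N n (pr : 'M[K]_(N, n)) inj :
  linear (corner_res pr inj).
Proof. by move=> c D D'; rewrite /corner_res mulmxDr mulmxDl -scalemxAr -scalemxAl. Qed.

HB.instance Definition _ (K : fieldType) N n (pr : 'M[K]_(N, n)) inj :=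
  GRing.isLinear.Build K _ _ _ (corner_res pr inj) (corner_res_is_linear pr inj).

Fact corner_ext_is_linear (K : fieldType) N n (pr : 'M[K]_(N, n)) inj :
  linear (corner_ext pr inj).
Proof. by move=> c D D'; rewrite /corner_ext mulmxDr mulmxDl -scalemxAr -scalemxAl. Qed.

HB.instance Definition _ (K : fieldType) N n (pr : 'M[K]_(N, n)) inj :=
  GRing.isLinear.Build K _ _ _ (corner_ext pr inj) (corner_ext_is_linear pr inj).

Lemma corner_res_ext_orth (K : fieldType) N n n' (pr : 'M[K]_(N, n)) inj
    (pr' : 'M[K]_(N, n')) inj' D :
  inj *m pr' = 0 -> corner_res pr inj (corner_ext pr' inj' D) = 0.
Proof. by move=> orth; rewrite /corner_res /corner_ext !mulmxA orth !mul0mx. Qed.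

Section ProductAlgebra.
Variable K : fieldType.
Variables (n m : nat) (A : algd K n) (B : algd K m).
Hypotheses (HA : unital_bilinear A) (HB : unital_bilinear B).
Local Notation P := (palg A B).
Local Notation prA := (col_mx 1%:M 0 : 'M[K]_(n + m, n)).
Local Notation injA := (row_mx 1%:M 0 : 'M[K]_(n, n + m)).
Local Notation prB := (col_mx 0 1%:M : 'M[K]_(n + m, m)).
Local Notation injB := (row_mx 0 1%:M : 'M[K]_(m, n + m)).

Lemma mul_prA (x : 'rV[K]_(n + m)) : x *m prA = lsubmx x.
Proof. by rewrite -[x in LHS]hsubmxK mul_row_col mulmx1 mulmx0 addr0. Qed.

Lemma mul_prB (x : 'rV[K]_(n + m)) : x *m prB = rsubmx x.
Proof. by rewrite -[x in LHS]hsubmxK mul_row_col mulmx1 mulmx0 add0r. Qed.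

Lemma mul_injA (a : 'rV[K]_n) : a *m injA = row_mx a 0.
Proof. by rewrite mul_mx_row mulmx1 mulmx0. Qed.

Lemma mul_injB (b : 'rV[K]_m) : b *m injB = row_mx 0 b.
Proof. by rewrite mul_mx_row mulmx1 mulmx0. Qed.

Lemma unital_palg : unital_bilinear P.
Proof.
case: HA => A1 A2 A3 A4; case: HB => B1 B2 B3 B4; split => /=.
- by move=> k a b c; rewrite !linearP /= A1 B1 scale_row_mx add_row_mx.
- by move=> k a b c; rewrite !linearP /= A2 B2 scale_row_mx add_row_mx.
- by move=> a; rewrite row_mxKl row_mxKr A3 B3 hsubmxK.
- by move=> a; rewrite row_mxKl row_mxKr A4 B4 hsubmxK.
Qed.

Lemma palg_retractA : retract_ideal P A prA injA.
Proof.
split=> [|x y|a x|a x]; rewrite ?mul_prA ?mul_injA /= ?row_mxKl ?row_mxKr //.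
- by rewrite mul_row_col mulmx1 mulmx0 addr0.
- by rewrite (amul0l HB).
- by rewrite (amul0r HB).
Qed.

Lemma palg_retractB : retract_ideal P B prB injB.
Proof.
split=> [|x y|a x|a x]; rewrite ?mul_prB ?mul_injB /= ?row_mxKl ?row_mxKr //.
- by rewrite mul_row_col mulmx1 mulmx0 add0r.
- by rewrite (amul0l HA).
- by rewrite (amul0r HA).
Qed.

Lemma palg_unit_decomp : prA *m injA + prB *m injB = 1%:M.
Proof.
rewrite !mul_col_row ?mulmx1 ?mul1mx ?mulmx0 ?mul0mx add_block_mx.
by rewrite !addr0 !add0r -scalar_mx_block.
Qed.

Lemma palg_nf_decomp D : is_nf P D ->
  D = corner_ext prA injA (corner_res prA injA D) +
      corner_ext prB injB (corner_res prB injB D).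
Proof.
move=> nfD; rewrite (corner_res_extE unital_palg HA palg_retractA nfD).
rewrite (corner_res_extE unital_palg HB palg_retractB nfD).
by rewrite -mulmxDl palg_unit_decomp mul1mx.
Qed.

Lemma palg_frobspace_split :
  exists (f : 'Hom('M[K]_(n + m, (n + m) * (n + m)), 'M[K]_(n, n * n)))
         (g : 'Hom('M[K]_(n + m, (n + m) * (n + m)), 'M[K]_(m, m * m))),
    [/\ (forall D, D \in frobspace P -> f D \in frobspace A /\ g D \in frobspace B),
        (forall D1 D2, D1 \in frobspace A -> D2 \in frobspace B ->
           exists2 D, D \in frobspace P & f D = D1 /\ g D = D2) &
        (forall D, D \in frobspace P -> f D = 0 -> g D = 0 -> D = 0)].
Proof.
have resE N k (pr : 'M[K]_(N, k)) inj D :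
  linfun (corner_res pr inj) D = corner_res pr inj D by exact: lfunE.
exists (linfun (corner_res prA injA)), (linfun (corner_res prB injB)); split.
- move=> D /mem_frobspace nfD; rewrite !resE !mem_frobspace.
  split; first exact (corner_res_nf unital_palg HA palg_retractA nfD).
  exact (corner_res_nf unital_palg HB palg_retractB nfD).
- move=> D1 D2 /mem_frobspace nf1 /mem_frobspace nf2.
  exists (corner_ext prA injA D1 + corner_ext prB injB D2).
    apply: memvD; apply/mem_frobspace.
      exact (corner_ext_nf unital_palg HA palg_retractA nf1).
    exact (corner_ext_nf unital_palg HB palg_retractB nf2).
  rewrite !resE !linearD /= (corner_extK palg_retractA) (corner_extK palg_retractB).
  by rewrite !corner_res_ext_orth ?addr0 ?add0r // mul_row_col mulmx0 mulmx1 (addr0, add0r).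
- move=> D /mem_frobspace nfD; rewrite !resE => resA0 resB0.
  by rewrite (palg_nf_decomp nfD) resA0 resB0 !linear0 addr0.
Qed.

End ProductAlgebra.

Section TensorSubspaces.
Variable K : fieldType.
Local Notation ev := (ev K).

Section BasisCoordinates.
Variables (p q : nat) (U : {vspace 'M[K]_(p, q)}).

Definition vbasis_mx : 'M[K]_(\dim U, p * q) := \matrix_x mxvec (vbasis U)`_x.

Definition coord_mx : 'M[K]_(p * q, \dim U) :=
  \matrix_(a, x) coord (vbasis U) x (vec_mx (ev a)).

Lemma mul_coord_mx v : v *m coord_mx = \row_x coord (vbasis U) x (vec_mx v).
Proof.
have coord_lin (x : 'I_(\dim U)) :
    linear (fun v : 'rV[K]_(p * q) => coord (vbasis U) x (vec_mx v) : K^o).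
  by move=> c u w; rewrite !linearP.
apply/rowP => x; rewrite !mxE (linear_row_expand (coord_lin x) v).
by apply: eq_bigr => a _; rewrite mxE.
Qed.

Lemma vbasis_coord_mx (x : 'I_(\dim U)) : mxvec (vbasis U)`_x *m coord_mx = ev x.
Proof.
apply/rowP => y; rewrite mul_coord_mx mxvecK evE mxE.
by rewrite coord_free // (basis_free (vbasisP U)).
Qed.

Lemma coord_vbasis_mx v : vec_mx v \in U -> v *m coord_mx *m vbasis_mx = v.
Proof.
move=> vU; rewrite mulmx_sum_row -[v in RHS]vec_mxK (coord_vbasis vU) linear_sum.
by apply: eq_bigr => x _; rewrite mul_coord_mx rowK mxE linearZ.
Qed.

End BasisCoordinates.

Variables (p1 q1 p2 q2 : nat).
Variables (U : {vspace 'M[K]_(p1, q1)}) (W : {vspace 'M[K]_(p2, q2)}).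

Lemma vtens_basis (x : 'I_(\dim U)) (y : 'I_(\dim W)) :
  tens (mxvec (vbasis U)`_x) (mxvec (vbasis W)`_y) \in vtens U W.
Proof. by apply: memv_span; apply: allpairs_f; apply: mem_nth; rewrite size_tuple. Qed.

Lemma mem_vtens T :
  (forall b, vec_mx (col b (vec_mx T))^T \in U) ->
  (forall a, vec_mx (row a (vec_mx T)) \in W) -> T \in vtens U W.
Proof.
move=> colU rowW; set M := vec_mx T.
set Cu := coord_mx U; set Bu := vbasis_mx U; set Cw := coord_mx W; set Bw := vbasis_mx W.
have M_rows : M = M *m Cw *m Bw.
  by apply/row_matrixP => a; rewrite !row_mul coord_vbasis_mx.
have M_cols : M = Bu^T *m (Cu^T *m M).
  apply: trmx_inj; rewrite !trmx_mul !trmxK.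
  by apply/row_matrixP => b; rewrite !row_mul -tr_col coord_vbasis_mx.
have -> : T = mxvec (Bu^T *m (Cu^T *m M *m Cw) *m Bw).
  by rewrite -[T]vec_mxK -/M {1}M_rows {1}M_cols !mulmxA.
rewrite [Cu^T *m M *m Cw]matrix_sum_delta mulmx_sumr mulmx_suml linear_sum.
apply: memv_suml => x _; rewrite mulmx_sumr mulmx_suml linear_sum.
apply: memv_suml => y _; rewrite -scalemxAr -scalemxAl linearZ; apply: memvZ.
have -> : Bu^T *m delta_mx x y *m Bw = (row x Bu)^T *m row y Bw.
  by rewrite !rowE trmx_mul trmx_delta !mulmxA -(mulmxA _ _ (delta_mx 0 y)) mul_delta_mx.
by rewrite !rowK; apply: vtens_basis.
Qed.

Lemma dim_vtens : \dim (vtens U W) = (\dim U * \dim W)%N.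
Proof.
apply/eqP; rewrite eqn_leq; apply/andP; split.
  by apply: leq_trans (dim_span _) _; rewrite size_allpairs !size_tuple.
set F := linfun (mxtens (coord_mx U) (coord_mx W)).
have full : (fullv <= F @: vtens U W)%VS.
  apply/subvP => v _; rewrite [v]row_sum_delta; apply: memv_suml => Z _; apply: memvZ.
  case/mxvec_indexP: Z => x y; rewrite -[delta_mx _ _]/(ev _) ev_tens.
  rewrite -(vbasis_coord_mx x) -(vbasis_coord_mx y) -mxtens_tens -[mxtens _ _ _]lfunE.
  exact/memv_img/vtens_basis.
have := dimvS full; rewrite dimvf dim_matrix mul1r => /leq_trans; apply.
by rewrite -(limg_ker_dim F) leq_addl.
Qed.

End TensorSubspaces.

Section TensorAlgebra.
Variable K : fieldType.
Local Notation ev := (ev K).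
Variables (n m : nat) (A : algd K n) (B : algd K m).
Hypotheses (HA : unital_bilinear A) (HB : unital_bilinear B).
Local Notation T := (talg A B).

Lemma unital_talg : unital_bilinear T.
Proof.
split=> /=; [by move=> k a b c; rewrite tmul_linl | by move=> k a b c; rewrite tmul_linr | |].
- apply: linear_row_ext; [exact: tmul_linr | by [] |].
  by case/mxvec_indexP => k l; rewrite ev_tens tmul_tens // (amul1l HA) (amul1l HB).
- apply: linear_row_ext; [exact: tmul_linl | by [] |].
  by case/mxvec_indexP => k l; rewrite ev_tens tmul_tens // (amul1r HA) (amul1r HB).
Qed.

Lemma sconst_talg i j k l r s :
  sconst T (mxvec_index i j) (mxvec_index k l) (mxvec_index r s) =
  sconst A i k r * sconst B j l s.
Proof. by rewrite /sconst !ev_tens /= tmul_tens // tensE. Qed.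

Lemma tens_mulmxE N (u : 'rV[K]_n) (v : 'rV[K]_m) (D : 'M[K]_(n * m, N)) Z :
  (tens u v *m D) 0 Z = \sum_t \sum_t' u 0 t * (v 0 t' * D (mxvec_index t t') Z).
Proof.
rewrite mxE sum_mxvec_index; apply: eq_bigr => t _; apply: eq_bigr => t' _.
by rewrite tensE mulrA.
Qed.

(* Sends X (x) Y to a (x) b |-> Delta_X(a) (x) Delta_Y(b) with the two middle
   tensor factors exchanged. *)
Definition coprod_of_tens (X : 'rV[K]_((n * (n * n)) * (m * (m * m)))) :
    'M[K]_(n * m, (n * m) * (n * m)) :=
  \matrix_(I, Z) let: (i, j) := mxvec_unindex I in
                 let: (kp, lq) := mxvec_unindex Z in
                 let: (k, p) := mxvec_unindex kp in
                 let: (l, q) := mxvec_unindex lq in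
    X 0 (mxvec_index (mxvec_index i (mxvec_index k l)) (mxvec_index j (mxvec_index p q))).

Definition tens_of_coprod (D : 'M[K]_(n * m, (n * m) * (n * m))) :
    'rV[K]_((n * (n * n)) * (m * (m * m))) :=
  mxvec (\matrix_(a, b) let: (i, kl) := mxvec_unindex a in
                        let: (k, l) := mxvec_unindex kl in
                        let: (j, pq) := mxvec_unindex b in
                        let: (p, q) := mxvec_unindex pq in
    D (mxvec_index i j) (mxvec_index (mxvec_index k p) (mxvec_index l q))).

Lemma coprod_of_tensE X i j k p l q :
  coprod_of_tens X (mxvec_index i j) (mxvec_index (mxvec_index k p) (mxvec_index l q)) =
  X 0 (mxvec_index (mxvec_index i (mxvec_index k l)) (mxvec_index j (mxvec_index p q))).
Proof. by rewrite mxE !mxvec_indexK. Qed.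

Lemma tens_of_coprodE D i k l j p q :
  tens_of_coprod D 0
    (mxvec_index (mxvec_index i (mxvec_index k l)) (mxvec_index j (mxvec_index p q))) =
  D (mxvec_index i j) (mxvec_index (mxvec_index k p) (mxvec_index l q)).
Proof. by rewrite mxvecE mxE !mxvec_indexK. Qed.

Lemma tens_of_coprodK : cancel tens_of_coprod coprod_of_tens.
Proof.
move=> D; apply/matrixP => I Z; case/mxvec_indexP: I => i j.
case/mxvec_indexP: Z => kp lq; case/mxvec_indexP: kp => k p; case/mxvec_indexP: lq => l q.
by rewrite coprod_of_tensE tens_of_coprodE.
Qed.

Lemma coprod_of_tensK : cancel coprod_of_tens tens_of_coprod.
Proof.
move=> X; apply/rowP => Y; case/mxvec_indexP: Y => a b.
case/mxvec_indexP: a => i kl; case/mxvec_indexP: kl => k l.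
case/mxvec_indexP: b => j pq; case/mxvec_indexP: pq => p q.
by rewrite tens_of_coprodE coprod_of_tensE.
Qed.

Fact coprod_of_tens_is_linear : linear coprod_of_tens.
Proof.
move=> c X Y; apply/matrixP => I Z; case/mxvec_indexP: I => i j.
case/mxvec_indexP: Z => kp lq; case/mxvec_indexP: kp => k p; case/mxvec_indexP: lq => l q.
rewrite coprod_of_tensE [in RHS]mxE [in RHS]mxE !coprod_of_tensE.
by rewrite !mxE.
Qed.

HB.instance Definition _ :=
  GRing.isLinear.Build K _ _ _ coprod_of_tens coprod_of_tens_is_linear.

Lemma coprod_of_tens_nf X Y : nf_coord A X -> nf_coord B Y ->
  nf_coord T (coprod_of_tens (tens (mxvec X) (mxvec Y))).
Proof.
have split_prod (a c : 'I_n -> K) (b d : 'I_m -> K) :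
    \sum_t \sum_t' (a t * b t') * (c t * d t') = (\sum_t a t * c t) * (\sum_t' b t' * d t').
  by rewrite mulr_suml; apply: eq_bigr => t _; rewrite mulr_sumr; apply: eq_bigr => t' _; ring.
have entryE i j k p l q :
    coprod_of_tens (tens (mxvec X) (mxvec Y)) (mxvec_index i j)
      (mxvec_index (mxvec_index k p) (mxvec_index l q)) =
    X i (mxvec_index k l) * Y j (mxvec_index p q).
  by rewrite coprod_of_tensE tensE !mxvecE.
move=> nfX nfY I I' R S; case/mxvec_indexP: I => i j; case/mxvec_indexP: I' => k l.
case/mxvec_indexP: R => r r'; case/mxvec_indexP: S => s s'; rewrite !sum_mxvec_index.
under eq_bigr do under eq_bigr do rewrite sconst_talg entryE.
under [X in _ = X /\ _]eq_bigr do under eq_bigr do rewrite sconst_talg entryE.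
under [X in _ /\ _ = X]eq_bigr do under eq_bigr do rewrite sconst_talg entryE.
by split; rewrite !split_prod;
  [rewrite (nfX i k r s).1 (nfY j l r' s').1 | rewrite (nfX i k r s).2 (nfY j l r' s').2].
Qed.

Definition coprod_slicel D (j : 'I_m) (p q : 'I_m) : 'M[K]_(n, n * n) :=
  vec_mx (col (mxvec_index j (mxvec_index p q)) (vec_mx (tens_of_coprod D)))^T.

Definition coprod_slicer D (i : 'I_n) (k l : 'I_n) : 'M[K]_(m, m * m) :=
  vec_mx (row (mxvec_index i (mxvec_index k l)) (vec_mx (tens_of_coprod D))).

Lemma coprod_slicelE D j p q i k l :
  coprod_slicel D j p q i (mxvec_index k l) =
  D (mxvec_index i j) (mxvec_index (mxvec_index k p) (mxvec_index l q)).
Proof. by rewrite mxE 2!mxE mxE tens_of_coprodE. Qed.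

Lemma coprod_slicerE D i k l j p q :
  coprod_slicer D i k l j (mxvec_index p q) =
  D (mxvec_index i j) (mxvec_index (mxvec_index k p) (mxvec_index l q)).
Proof. by rewrite mxE 2!mxE tens_of_coprodE. Qed.

Lemma coprod_slicel_nf D j p q : is_nf T D -> nf_coord A (coprod_slicel D j p q).
Proof.
move=> nfD i k r s.
set Z := mxvec_index (mxvec_index r p) (mxvec_index s q).
have lhsE (b b' : 'rV[K]_m) : amul B b b' = ev j ->
    \sum_t sconst A i k t * coprod_slicel D j p q t (mxvec_index r s) =
    (amul T (tens (ev i) b) (tens (ev k) b') *m D) 0 Z.
  move=> bb'; rewrite /= tmul_tens // bb' tens_mulmxE; apply: eq_bigr => t _.
  by rewrite -mulr_sumr; under eq_bigr do rewrite evC; rewrite sum_ev_mul coprod_slicelE.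
split.
  rewrite (lhsE (aone B) (ev j)) ?(amul1l HB) // (nfD _ _).1 (tmul_tens1l unital_talg unital_talg).
  rewrite sum_mxvec_index; apply: eq_bigr => u _; rewrite coprod_slicelE.
  under eq_bigr do
    rewrite -ev_tens row_ev_mulmx mxE ev_tens /= tmul_tens // (amul1l HB) tensE mulrCA.
  by rewrite -mulr_sumr sum_mul_ev mulrC.
rewrite (lhsE (ev j) (aone B)) ?(amul1r HB) // (nfD _ _).2 (tmul_tens1r unital_talg unital_talg).
rewrite sum_mxvec_index; apply: eq_bigr => v _; rewrite coprod_slicelE.
under eq_bigr do
  rewrite -ev_tens row_ev_mulmx mxE ev_tens /= tmul_tens // (amul1r HB) tensE mulrCA.
by rewrite -mulr_sumr sum_mul_ev mulrC.
Qed.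

Lemma coprod_slicer_nf D i k l : is_nf T D -> nf_coord B (coprod_slicer D i k l).
Proof.
move=> nfD j l' r s.
set Z := mxvec_index (mxvec_index k r) (mxvec_index l s).
have lhsE (a a' : 'rV[K]_n) : amul A a a' = ev i ->
    \sum_t sconst B j l' t * coprod_slicer D i k l t (mxvec_index r s) =
    (amul T (tens a (ev j)) (tens a' (ev l')) *m D) 0 Z.
  move=> aa'; rewrite /= tmul_tens // aa' tens_mulmxE.
  under [X in _ = X]eq_bigr do rewrite -mulr_sumr evC; rewrite sum_ev_mul.
  by apply: eq_bigr => t _; rewrite coprod_slicerE.
split.
  rewrite (lhsE (aone A) (ev i)) ?(amul1l HA) // (nfD _ _).1 (tmul_tens1l unital_talg unital_talg).
  rewrite sum_mxvec_index exchange_big; apply: eq_bigr => u' _; rewrite coprod_slicerE.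
  under eq_bigr do
    rewrite -ev_tens row_ev_mulmx mxE ev_tens /= tmul_tens // (amul1l HA) tensE mulrCA.
  by rewrite sum_ev_mul.
rewrite (lhsE (ev i) (aone A)) ?(amul1r HA) // (nfD _ _).2 (tmul_tens1r unital_talg unital_talg).
rewrite sum_mxvec_index exchange_big; apply: eq_bigr => v' _; rewrite coprod_slicerE.
under eq_bigr do
  rewrite -ev_tens row_ev_mulmx mxE ev_tens /= tmul_tens // (amul1r HA) tensE mulrCA.
by rewrite sum_ev_mul.
Qed.

End TensorAlgebra.

Lemma talg_frobspace (K : fieldType) n m (A : algd K n) (B : algd K m) :
  unital_bilinear A -> unital_bilinear B ->
  (linfun (@coprod_of_tens K n m) @: vtens (frobspace A) (frobspace B))%VS =
  frobspace (talg A B).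
Proof.
move=> HA HB; have HT := unital_talg HA HB.
apply/eqP; rewrite eqEsubv; apply/andP; split.
  rewrite limg_span; apply/span_subvP => D /mapP[X /allpairsP[[U V] [UA VB ->]] ->].
  rewrite lfunE /=; apply/(mem_frobspace_coord HT)/(coprod_of_tens_nf HA HB).
    exact/(mem_frobspace_coord HA)/vbasis_mem.
  exact/(mem_frobspace_coord HB)/vbasis_mem.
apply/subvP => D /mem_frobspace nfD; rewrite -[D]tens_of_coprodK -[coprod_of_tens _]lfunE.
apply/memv_img/mem_vtens => [b|a].
  case/mxvec_indexP: b => j pq; case/mxvec_indexP: pq => p q.
  exact/(mem_frobspace_coord HA)/(coprod_slicel_nf HA HB).
case/mxvec_indexP: a => i kl; case/mxvec_indexP: kl => k l.
exact/(mem_frobspace_coord HB)/(coprod_slicer_nf HA HB).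
Qed.

Theorem proposition8 (K : fieldType) (n m : nat) (A : algd K n) (B : algd K m) :
  is_alg A -> is_alg B ->
  ( (exists (f : 'Hom('M[K]_(n + m, (n + m) * (n + m)), 'M[K]_(n, n * n)))
            (g : 'Hom('M[K]_(n + m, (n + m) * (n + m)), 'M[K]_(m, m * m))),
       [/\ (forall D, D \in frobspace (palg A B) ->
              f D \in frobspace A /\ g D \in frobspace B),
           (forall D1 D2, D1 \in frobspace A -> D2 \in frobspace B ->
              exists2 D, D \in frobspace (palg A B) & f D = D1 /\ g D = D2) &
           (forall D, D \in frobspace (palg A B) -> f D = 0 -> g D = 0 -> D = 0)])
    /\ Frobdim (palg A B) = (Frobdim A + Frobdim B)%N )
  /\
  ( (exists f : 'Hom('rV[K]_((n * (n * n)) * (m * (m * m))),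
                     'M[K]_(n * m, (n * m) * (n * m))),
       (f @: vtens (frobspace A) (frobspace B))%VS = frobspace (talg A B) /\
       (vtens (frobspace A) (frobspace B) :&: lker f)%VS = 0%VS)
    /\ Frobdim (talg A B) = (Frobdim A * Frobdim B)%N ).
Proof.
move=> /is_alg_unital_bilinear HA /is_alg_unital_bilinear HB.
have [f [g [fgP onto fg_inj]]] := palg_frobspace_split HA HB.
have ker0 : lker (linfun (@coprod_of_tens K n m)) = 0%VS.
  by apply/eqP/lker0P => X Y; rewrite !lfunE => /(can_inj (@coprod_of_tensK K n m)).
split; split.
- by exists f, g.
- exact: dimv_of_split fgP onto fg_inj.
- by exists (linfun (@coprod_of_tens K n m)); rewrite talg_frobspace // ker0 capv0.
by rewrite /Frobdim -talg_frobspace // limg_dim_eq ?ker0 ?capv0 // dim_vtens.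
Qed.
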